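(* Let $\star$ be a state over time function satisfying axiom (E). Then for every channel $\mathcal{E}_{B|A}$ and every quantum state over spacetime $\rho_{AE}$ on $A\otimes E$, $$\mathcal{E}_{B|A}\star\rho_{AE}=\big((\mathcal{E}_{B|A}\star\,\cdot\,)\otimes\mathrm{id}_E\big)(\rho_{AE}),$$ where $\mathcal{E}_{B|A}\star\,\cdot\,$ denotes the linear map $\sigma_A\mapsto\mathcal{E}_{B|A}\star\sigma_A$ from $\mathfrak{B}(A)$ to $\mathfrak{B}(A\otimes B)$. Conversely, every state-linear state over time function satisfies axiom (E) when its action on subsystems is defined by this formula.
   Context: Systems are finite-dimensional Hilbert spaces; $\mathfrak{B}(A)$ linear operators, $\mathfrak{S}(A)$ density operators, $\mathfrak{C}(A,B)$ quantum channels (CPTP maps $\mathfrak{B}(A)\to\mathfrak{B}(B)$). A state over time function assigns to all systems $A,B$ a map $\star:\mathfrak{C}(A,B)\times\mathfrak{S}(A)\to\mathfrak{B}(A\otimes B)$, $(\mathcal{E},\rho)\mapsto\mathcal{E}_{B|A}\star\rho_A$, with $\mathrm{Tr}_A[\mathcal{E}\star\rho]=\mathcal{E}(\rho)$ and $\mathrm{Tr}_B[\mathcal{E}\star\rho]=\rho$, extended homogeneously by $(\lambda\mathcal{E})\star\rho=\mathcal{E}\star(\lambda\rho)=\lambda(\mathcal{E}\star\rho)$, $\lambda\in\mathbb{C}$. It is state-linear if it is linear in the second argument (a state-linear function extends uniquely to a linear map in the second argument on all of $\mathfrak{B}(A)$). A quantum state over spacetime on $A\otimes E$ is either a density operator on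 $A\otimes E$ or an operator of the form $\mathcal{F}\star\sigma$. Axiom (E): for all systems $A,B,E$, every quantum state over spacetime $\rho_{AE}$ and every channel $\mathcal{E}_{B|A}$, an operator $\mathcal{E}_{B|A}\star\rho_{AE}$ on $A\otimes B\otimes E$ is defined such that for every completely positive trace-non-increasing map $\mathcal{I}_E$ on $E$, $\mathcal{I}_E[\mathcal{E}_{B|A}\star\rho_{AE}]=\mathcal{E}_{B|A}\star\mathcal{I}_E(\rho_{AE})$, and $\mathrm{Tr}_A[\mathcal{E}_{B|A}\star\rho_{AE}]=(\mathcal{E}_{B|A}\otimes\mathrm{id}_E)(\rho_{AE})$. *)

From mathcomp Require Import all_boot all_order all_algebra.
From mathcomp Require Import reals.
From mathcomp.real_closed Require Export complex mxtens.

Set Implicit Arguments.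
Unset Strict Implicit.
Unset Printing Implicit Defensive.

Import Order.TTheory GRing.Theory Num.Theory.
Local Open Scope ring_scope.

(* A system is a finite-dimensional Hilbert space C^m, identified with its
   dimension m; B(A) = 'M[R[i]]_m.  The composite A (x) B has dimension m*n,
   with basis index mxtens_index (a, b) (A is the first tensor factor), and
   A *t B is the Kronecker product. *)

Definition adjmx (R : realType) (m n : nat) (A : 'M[R[i]]_(m, n)) : 'M[R[i]]_(n, m) :=
  \matrix_(i, j) (A j i)^*.

Definition is_psd (R : realType) (m : nat) (A : 'M[R[i]]_m) : Prop :=
  forall v : 'cV[R[i]]_m, 0 <= (adjmx v *m A *m v) 0 0.

Definition is_density (R : realType) (m : nat) (A : 'M[R[i]]_m) : Prop :=
  is_psd A /\ \tr A = 1.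

Definition is_linear (R : realType) (m n : nat)
    (f : 'M[R[i]]_m -> 'M[R[i]]_n) : Prop :=
  forall (a : R[i]) (x y : 'M[R[i]]_m), f (a *: x + y) = a *: f x + f y.

(* f (x) g acting on B(A1 (x) A2), defined on the matrix-unit basis and
   extended linearly (for linear f, g this is the usual tensor product map). *)
Definition tensor_map (R : realType) (m1 n1 m2 n2 : nat)
    (f : 'M[R[i]]_m1 -> 'M[R[i]]_n1) (g : 'M[R[i]]_m2 -> 'M[R[i]]_n2)
    (X : 'M[R[i]]_(m1 * m2)) : 'M[R[i]]_(n1 * n2) :=
  \sum_(a < m1) \sum_(b < m1) \sum_(c < m2) \sum_(d < m2)
     X (mxtens_index (a, c)) (mxtens_index (b, d))
       *: (f (delta_mx a b) *t g (delta_mx c d)).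

Definition is_CP (R : realType) (m n : nat) (f : 'M[R[i]]_m -> 'M[R[i]]_n) : Prop :=
  is_linear f /\
  forall (k : nat) (X : 'M[R[i]]_(m * k)),
    is_psd X -> is_psd (tensor_map f (fun Y : 'M[R[i]]_k => Y) X).

Definition is_TP (R : realType) (m n : nat) (f : 'M[R[i]]_m -> 'M[R[i]]_n) : Prop :=
  forall X : 'M[R[i]]_m, \tr (f X) = \tr X.

Definition is_TNI (R : realType) (m n : nat) (f : 'M[R[i]]_m -> 'M[R[i]]_n) : Prop :=
  forall X : 'M[R[i]]_m, is_psd X -> \tr (f X) <= \tr X.

Definition is_channel (R : realType) (m n : nat) (f : 'M[R[i]]_m -> 'M[R[i]]_n) : Prop :=
  is_CP f /\ is_TP f.

Definition ptr1 (R : realType) (m n : nat) (X : 'M[R[i]]_(m * n)) : 'M[R[i]]_n :=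
  \matrix_(i, j) \sum_(a < m) X (mxtens_index (a, i)) (mxtens_index (a, j)).
Definition ptr2 (R : realType) (m n : nat) (X : 'M[R[i]]_(m * n)) : 'M[R[i]]_m :=
  \matrix_(i, j) \sum_(b < n) X (mxtens_index (i, b)) (mxtens_index (j, b)).

(* the type of a (candidate) state over time function:
   star m n E rho = E_{B|A} * rho_A, an operator on A (x) B *)
Definition sot_fun (R : realType) : Type :=
  forall m n : nat, ('M[R[i]]_m -> 'M[R[i]]_n) -> 'M[R[i]]_m -> 'M[R[i]]_(m * n).

(* state over time function: marginal conditions on channels and states,
   together with the homogeneous extension conventions *)
Definition is_sot (R : realType) (star : sot_fun R) : Prop :=
  forall (m n : nat) (E : 'M[R[i]]_m -> 'M[R[i]]_n), is_channel E ->
  forall rho : 'M[R[i]]_m, is_density rho ->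
    [/\ ptr1 (star m n E rho) = E rho,
        ptr2 (star m n E rho) = rho,
        forall lam : R[i], star m n E (lam *: rho) = lam *: star m n E rho &
        forall lam : R[i], star m n (fun X => lam *: E X) rho = lam *: star m n E rho].

Definition is_linext (R : realType) (star : sot_fun R) (m n : nat)
    (E : 'M[R[i]]_m -> 'M[R[i]]_n) (L : 'M[R[i]]_m -> 'M[R[i]]_(m * n)) : Prop :=
  is_linear L /\ forall rho, is_density rho -> L rho = star m n E rho.

Definition state_linear (R : realType) (star : sot_fun R) : Prop :=
  forall (m n : nat) (E : 'M[R[i]]_m -> 'M[R[i]]_n), is_channel E ->
    exists L, is_linext star E L.

Definition is_QSS (R : realType) (star : sot_fun R) (m k : nat)
    (X : 'M[R[i]]_(m * k)) : Prop :=
  is_density X \/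
  exists (F : 'M[R[i]]_m -> 'M[R[i]]_k) (sigma : 'M[R[i]]_m),
    [/\ is_channel F, is_density sigma & X = star m k F sigma].

(* the type of the action on subsystems required by axiom (E):
   ext m n k E rho_AE = E_{B|A} * rho_AE, an operator on A (x) B (x) E *)
Definition ext_fun (R : realType) : Type :=
  forall m n k : nat, ('M[R[i]]_m -> 'M[R[i]]_n) ->
    'M[R[i]]_(m * k) -> 'M[R[i]]_(m * n * k).

Definition axiomE (R : realType) (star : sot_fun R) (ext : ext_fun R) : Prop :=
  (forall (m n k k' : nat) (E : 'M[R[i]]_m -> 'M[R[i]]_n)
          (I : 'M[R[i]]_k -> 'M[R[i]]_k') (rho : 'M[R[i]]_(m * k)),
     is_channel E -> is_QSS star rho -> is_CP I -> is_TNI I ->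
     tensor_map (fun Y : 'M[R[i]]_(m * n) => Y) I (ext m n k E rho)
     = ext m n k' E (tensor_map (fun Y : 'M[R[i]]_m => Y) I rho)) /\
  (forall (m n k : nat) (E : 'M[R[i]]_m -> 'M[R[i]]_n) (rho : 'M[R[i]]_(m * k)),
     is_channel E -> is_QSS star rho ->
     tensor_map (@ptr1 R m n) (fun Y : 'M[R[i]]_k => Y) (ext m n k E rho)
     = tensor_map E (fun Y : 'M[R[i]]_k => Y) rho) /\
  (* trivial environment (A (x) C = A): the action is the given one, on
     (scaled) states ... *)
  (forall (m n : nat) (E : 'M[R[i]]_m -> 'M[R[i]]_n) (lam : R[i]) (rho : 'M[R[i]]_m),
     is_channel E -> is_density rho ->
     ext m n 1 E ((lam *: rho) *t (1%:M : 'M[R[i]]_1))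
     = star m n E (lam *: rho) *t (1%:M : 'M[R[i]]_1)) /\
  (forall (m n : nat) (E : 'M[R[i]]_m -> 'M[R[i]]_n) (L : 'M[R[i]]_m -> 'M[R[i]]_(m * n)),
     is_channel E -> is_linext star E L ->
     forall Y : 'M[R[i]]_m,
       ext m n 1 E (Y *t (1%:M : 'M[R[i]]_1)) = L Y *t (1%:M : 'M[R[i]]_1)).

From mathcomp Require Import all_boot all_order all_algebra.
From mathcomp Require Import reals ring.
From mathcomp.real_closed Require Import complex mxtens.
Import Order.TTheory GRing.Theory Num.Theory.
Local Open Scope ring_scope.
Set Implicit Arguments.
Unset Strict Implicit.
Unset Printing Implicit Defensive.

(* Axiom (E) applied to the flagged state p r1 (x) |0><0| + q r2 (x) |1><1|, reading the
   flag with <0|.|0>, <1|.|1> or discarding it, shows that rho |-> E * rho is convex on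
   states.  Being also homogeneous, it extends to a linear map L: densities span B(A), and
   since they are hermitian a complex linear relation between them splits into two real
   ones, which convexity handles.  Axiom (E) then makes E * rho_AE and (L (x) id)(rho_AE)
   agree after every CP trace-non-increasing map B(E) -> C, and the compressions by e_c and
   by (e_c + u e_d)/sqrt 2 with |u| = 1 already separate operators on A (x) B (x) E.  The
   converse is a direct computation, using again that linear maps agreeing on states agree. *)

Section Operators.
Variable R : realType.
Local Notation C := R[i].
Implicit Types (m n p k : nat).

Section LinearMaps.
Variables (m n : nat) (f : 'M[C]_m -> 'M[C]_n).
Hypothesis f_lin : is_linear f.

Lemma is_linearD x y : f (x + y) = f x + f y.
Proof. by rewrite -[x in LHS]scale1r f_lin scale1r. Qed.

Lemma is_linear0 : f 0 = 0.
Proof. by apply: (addIr (f 0)); rewrite -is_linearD !add0r. Qed.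

Lemma is_linearZ a x : f (a *: x) = a *: f x.
Proof. by rewrite -[a *: x]addr0 f_lin is_linear0 addr0. Qed.

Lemma is_linearB x y : f (x - y) = f x - f y.
Proof. by rewrite is_linearD -scaleN1r is_linearZ scaleN1r. Qed.

Lemma is_linear_sum I (r : seq I) (P : pred I) (F : I -> 'M[C]_m) :
  f (\sum_(i <- r | P i) F i) = \sum_(i <- r | P i) f (F i).
Proof. exact: (big_morph f is_linearD is_linear0). Qed.

End LinearMaps.

Lemma is_linear_comp m n p (f : 'M[C]_m -> 'M[C]_n) (g : 'M[C]_n -> 'M[C]_p) :
  is_linear f -> is_linear g -> is_linear (fun x => g (f x)).
Proof. by move=> f_lin g_lin a x y; rewrite f_lin g_lin. Qed.

Lemma is_linear_add m n (f g : 'M[C]_m -> 'M[C]_n) :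
  is_linear f -> is_linear g -> is_linear (fun x => f x + g x).
Proof.
by move=> f_lin g_lin a x y; rewrite f_lin g_lin scalerDr addrACA.
Qed.

Lemma is_linear_scale m n (s : C) (f : 'M[C]_m -> 'M[C]_n) :
  is_linear f -> is_linear (fun x => s *: f x).
Proof. by move=> f_lin a x y; rewrite f_lin scalerDr !scalerA mulrC. Qed.

Lemma is_linear_mxE m n (f : 'M[C]_m -> 'M[C]_n) (Y : 'M[C]_m) : is_linear f ->
  f Y = \sum_a \sum_b Y a b *: f (delta_mx a b).
Proof.
move=> f_lin; rewrite {1}[Y]matrix_sum_delta is_linear_sum //.
by apply: eq_bigr => a _; rewrite is_linear_sum //; apply: eq_bigr => b _; rewrite is_linearZ.
Qed.

Lemma adjmxD m n (A B : 'M[C]_(m, n)) : adjmx (A + B) = adjmx A + adjmx B.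
Proof. by apply/matrixP => i j; rewrite !mxE rmorphD. Qed.

Lemma adjmxZ m n a (A : 'M[C]_(m, n)) : adjmx (a *: A) = a^* *: adjmx A.
Proof. by apply/matrixP => i j; rewrite !mxE rmorphM. Qed.

Lemma adjmx_sum m n I (r : seq I) (P : pred I) (F : I -> 'M[C]_(m, n)) :
  adjmx (\sum_(i <- r | P i) F i) = \sum_(i <- r | P i) adjmx (F i).
Proof.
apply: big_morph; first exact: adjmxD.
by apply/matrixP => i j; rewrite !mxE conjC0.
Qed.

Lemma adjmxM m n p (A : 'M[C]_(m, n)) (B : 'M[C]_(n, p)) :
  adjmx (A *m B) = adjmx B *m adjmx A.
Proof.
apply/matrixP => i j; rewrite !mxE rmorph_sum; apply: eq_bigr => l _.
by rewrite !mxE rmorphM mulrC.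
Qed.

Lemma adjmx1 m : adjmx (1%:M : 'M[C]_m) = 1%:M.
Proof. by apply/matrixP => i j; rewrite !mxE eq_sym rmorph_nat. Qed.

Lemma adjmx_delta m n (i : 'I_m) (j : 'I_n) : adjmx (delta_mx i j : 'M[C]_(m, n)) = delta_mx j i.
Proof. by apply/matrixP => x y; rewrite !mxE rmorph_nat andbC. Qed.

Lemma adjmx_tens m n p q (A : 'M[C]_(m, n)) (B : 'M[C]_(p, q)) :
  adjmx (A *t B) = adjmx A *t adjmx B.
Proof. by apply/matrixP => i j; rewrite !mxE rmorphM. Qed.

Lemma tensmxDl m n p q (A B : 'M[C]_(m, n)) (D : 'M[C]_(p, q)) : (A + B) *t D = A *t D + B *t D.
Proof. by apply/matrixP => i j; rewrite !mxE mulrDl. Qed.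

Lemma tensmxDr m n p q (A : 'M[C]_(m, n)) (B D : 'M[C]_(p, q)) : A *t (B + D) = A *t B + A *t D.
Proof. by apply/matrixP => i j; rewrite !mxE mulrDr. Qed.

Lemma tensmxZl m n p q a (A : 'M[C]_(m, n)) (D : 'M[C]_(p, q)) : (a *: A) *t D = a *: (A *t D).
Proof. by apply/matrixP => i j; rewrite !mxE mulrA. Qed.

Lemma tensmxZr m n p q a (A : 'M[C]_(m, n)) (D : 'M[C]_(p, q)) : A *t (a *: D) = a *: (A *t D).
Proof. by apply/matrixP => i j; rewrite !mxE mulrCA. Qed.

Lemma tensmx_suml m n p q I (r : seq I) (P : pred I) (F : I -> 'M[C]_(m, n)) (D : 'M[C]_(p, q)) :
  (\sum_(i <- r | P i) F i) *t D = \sum_(i <- r | P i) (F i *t D).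
Proof. by apply: (big_morph (fun A => A *t D)) => [A B|]; rewrite ?tensmxDl ?tens0mx. Qed.

Lemma tensmx_sumr m n p q I (r : seq I) (P : pred I) (A : 'M[C]_(m, n)) (F : I -> 'M[C]_(p, q)) :
  A *t (\sum_(i <- r | P i) F i) = \sum_(i <- r | P i) (A *t F i).
Proof. by apply: (big_morph (fun D => A *t D)) => [B D|]; rewrite ?tensmxDr ?tensmx0. Qed.

Lemma tensmx11 m n : (1%:M : 'M[C]_m) *t (1%:M : 'M[C]_n) = 1%:M.
Proof.
apply/matrixP => i j; case: (mxtens_indexP i) => a c; case: (mxtens_indexP j) => b d.
by rewrite tensmxE !mxE (inj_eq (can_inj (@mxtens_indexK _ _))) xpair_eqE -natrM mulnb.
Qed.

Section TensorMap.
Variables (m1 n1 m2 n2 : nat).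
Implicit Types (f : 'M[C]_m1 -> 'M[C]_n1) (g : 'M[C]_m2 -> 'M[C]_n2).

Lemma tensor_mapE f g X : tensor_map f g X =
  \sum_(i : ('I_m1 * 'I_m1) * ('I_m2 * 'I_m2))
     X (mxtens_index (i.1.1, i.2.1)) (mxtens_index (i.1.2, i.2.2))
       *: (f (delta_mx i.1.1 i.1.2) *t g (delta_mx i.2.1 i.2.2)).
Proof.
rewrite /tensor_map; under eq_bigr => a _ do under eq_bigr => b _ do rewrite pair_big.
by rewrite pair_big pair_big.
Qed.

Lemma tensor_map_linear f g : is_linear (tensor_map f g).
Proof.
move=> a X Y; rewrite !tensor_mapE scaler_sumr -big_split; apply: eq_bigr => i _.
by rewrite !mxE scalerDl scalerA.
Qed.

Lemma tensor_mapDl f1 f2 g X :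
  tensor_map (fun Y => f1 Y + f2 Y) g X = tensor_map f1 g X + tensor_map f2 g X.
Proof.
by rewrite !tensor_mapE -big_split; apply: eq_bigr => i _; rewrite tensmxDl scalerDr.
Qed.

Lemma tensor_mapDr f g1 g2 X :
  tensor_map f (fun Y => g1 Y + g2 Y) X = tensor_map f g1 X + tensor_map f g2 X.
Proof.
by rewrite !tensor_mapE -big_split; apply: eq_bigr => i _; rewrite tensmxDr scalerDr.
Qed.

Lemma tensor_mapZl s f g X :
  tensor_map (fun Y => s *: f Y) g X = s *: tensor_map f g X.
Proof.
by rewrite !tensor_mapE scaler_sumr; apply: eq_bigr => i _; rewrite tensmxZl !scalerA mulrC.
Qed.

Lemma tensor_mapZr s f g X :
  tensor_map f (fun Y => s *: g Y) X = s *: tensor_map f g X.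
Proof.
by rewrite !tensor_mapE scaler_sumr; apply: eq_bigr => i _; rewrite tensmxZr !scalerA mulrC.
Qed.

Lemma tensor_map_tens f g A B : is_linear f -> is_linear g ->
  tensor_map f g (A *t B) = f A *t g B.
Proof.
move=> f_lin g_lin; rewrite (is_linear_mxE A f_lin) (is_linear_mxE B g_lin).
rewrite /tensor_map tensmx_suml; apply: eq_bigr => a _; rewrite tensmx_suml.
apply: eq_bigr => b _; rewrite tensmx_sumr; apply: eq_bigr => c _.
by rewrite tensmx_sumr; apply: eq_bigr => d _; rewrite tensmxE tensmxZl tensmxZr scalerA.
Qed.

End TensorMap.

Lemma sum_mxtens_index (V : nmodType) m k (F : 'I_(m * k) -> V) :
  \sum_i F i = \sum_(a < m) \sum_(c < k) F (mxtens_index (a, c)).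
Proof.
rewrite pair_big (reindex (@mxtens_index m k)) /=; first by apply: eq_bigr => -[a c] _.
by exists (@mxtens_unindex m k) => x _; rewrite ?mxtens_indexK ?mxtens_unindexK.
Qed.

Lemma tens_delta m n p q (a : 'I_m) (b : 'I_n) (c : 'I_p) (d : 'I_q) :
  (delta_mx a b : 'M[C]_(m, n)) *t (delta_mx c d : 'M[C]_(p, q))
  = delta_mx (mxtens_index (a, c)) (mxtens_index (b, d)).
Proof.
apply/matrixP => i j; case: (mxtens_indexP i) => x z; case: (mxtens_indexP j) => y w.
by rewrite tensmxE !mxE !(inj_eq (can_inj (@mxtens_indexK _ _))) !xpair_eqE -natrM mulnb andbACA.
Qed.

Lemma tensor_map_id m k (X : 'M[C]_(m * k)) :
  tensor_map (fun Y : 'M[C]_m => Y) (fun Y : 'M[C]_k => Y) X = X.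
Proof.
apply: esym; rewrite {1}[X]matrix_sum_delta sum_mxtens_index; apply: eq_bigr => a _.
rewrite exchange_big sum_mxtens_index; apply: eq_bigr => b _.
rewrite exchange_big; apply: eq_bigr => c _; apply: eq_bigr => d _.
by rewrite tens_delta.
Qed.

Lemma eq_linear_tens m k p (Phi Psi : 'M[C]_(m * k) -> 'M[C]_p) :
  is_linear Phi -> is_linear Psi ->
  (forall a b c d, Phi ((delta_mx a b : 'M[C]_m) *t (delta_mx c d : 'M[C]_k))
                 = Psi ((delta_mx a b : 'M[C]_m) *t (delta_mx c d : 'M[C]_k))) ->
  forall X, Phi X = Psi X.
Proof.
move=> Phi_lin Psi_lin eq_basis X; rewrite -[X]tensor_map_id tensor_mapE.
by rewrite !is_linear_sum //; apply: eq_bigr => i _; rewrite !is_linearZ // eq_basis.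
Qed.

Lemma tensor_map_comm m n k k' (f : 'M[C]_m -> 'M[C]_n) (g : 'M[C]_k -> 'M[C]_k') X :
  is_linear f -> is_linear g ->
  tensor_map (fun Y : 'M[C]_n => Y) g (tensor_map f (fun Y : 'M[C]_k => Y) X)
  = tensor_map f (fun Y : 'M[C]_k' => Y) (tensor_map (fun Y : 'M[C]_m => Y) g X).
Proof.
move=> f_lin g_lin; move: X; apply: eq_linear_tens.
- by apply: is_linear_comp; apply: tensor_map_linear.
- by apply: is_linear_comp; apply: tensor_map_linear.
by move=> a b c d; rewrite !tensor_map_tens.
Qed.

Definition compress m n (S : 'M[C]_(m, n)) (X : 'M[C]_m) : 'M[C]_n := adjmx S *m X *m S.

Lemma compress_linear m n (S : 'M[C]_(m, n)) : is_linear (compress S).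
Proof. by move=> a X Y; rewrite /compress mulmxDr mulmxDl -scalemxAr -scalemxAl. Qed.

Lemma compressDZ m n (S T : 'M[C]_(m, n)) (u : C) X :
  compress (S + u *: T) X = compress S X + u *: (adjmx S *m X *m T)
                            + u^* *: (adjmx T *m X *m S) + (u^* * u) *: compress T X.
Proof.
rewrite /compress adjmxD adjmxZ !mulmxDl !mulmxDr -!scalemxAl -!scalemxAr !scalerA.
by rewrite -!addrA; congr (_ + _); rewrite addrCA.
Qed.

Lemma mulmx_delta_entry m (X : 'M[C]_m) (c d : 'I_m) :
  (adjmx (delta_mx c 0 : 'cV[C]_m) *m X *m (delta_mx d 0 : 'cV[C]_m)) 0 0 = X c d.
Proof. by rewrite adjmx_delta -rowE -colE !mxE. Qed.

Lemma compress_delta_addZ m (X : 'M[C]_m) (a b : 'I_m) (u : C) :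
  compress ((delta_mx a 0 : 'cV[C]_m) + u *: delta_mx b 0) X 0 0 =
  X a a + u * X a b + u^* * X b a + u^* * u * X b b.
Proof.
by rewrite compressDZ ![((_ + _ : 'M_1) 0 0)]mxE ![((_ *: _ : 'M_1) 0 0)]mxE !mulmx_delta_entry.
Qed.

Lemma tensor_map_compressl k l p (S : 'M[C]_(k, l)) X :
  tensor_map (compress S) (fun Y : 'M[C]_p => Y) X = compress (S *t (1%:M : 'M[C]_p)) X.
Proof.
move: X; apply: eq_linear_tens => [||a b c d].
- exact: tensor_map_linear.
- exact: compress_linear.
rewrite tensor_map_tens //; last exact: compress_linear.
by rewrite /compress adjmx_tens adjmx1 !tensmx_mul mul1mx mulmx1.
Qed.

Lemma tensor_map_compressr p k l (S : 'M[C]_(k, l)) X :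
  tensor_map (fun Y : 'M[C]_p => Y) (compress S) X = compress ((1%:M : 'M[C]_p) *t S) X.
Proof.
move: X; apply: eq_linear_tens => [||a b c d].
- exact: tensor_map_linear.
- exact: compress_linear.
rewrite tensor_map_tens //; last exact: compress_linear.
by rewrite /compress adjmx_tens adjmx1 !tensmx_mul mul1mx mulmx1.
Qed.

Lemma polarize (V : lmodType C) (x y : V) :
  (forall u : C, u^* * u = 1 -> u *: x + u^* *: y = 0) -> x = 0.
Proof.
move=> h; have i_unit : 'i^* * 'i = 1 :> C by rewrite conjCi mulNr -expr2 sqrCi opprK.
have y_eq : y = - x.
  have := h 1; rewrite conjC1 mulr1 !scale1r => /(_ erefl) /eqP.
  by rewrite addr_eq0 => /eqP ->; rewrite opprK.
move/eqP: (h 'i i_unit); rewrite y_eq conjCi scalerN scaleNr opprK -scalerDl scaler_eq0.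
by rewrite -mulr2n mulrn_eq0 (negbTE (neq0Ci C)) => /eqP.
Qed.

Lemma psdD m (X Y : 'M[C]_m) : is_psd X -> is_psd Y -> is_psd (X + Y).
Proof.
move=> X_psd Y_psd v; have := is_linearD (compress_linear v) X Y.
by rewrite /compress => ->; rewrite mxE addr_ge0.
Qed.

Lemma psdZ m (t : C) (X : 'M[C]_m) : 0 <= t -> is_psd X -> is_psd (t *: X).
Proof.
move=> t_ge0 X_psd v; have := is_linearZ (compress_linear v) t X.
by rewrite /compress => ->; rewrite mxE mulr_ge0.
Qed.

Lemma psd_compress m n (S : 'M[C]_(m, n)) X : is_psd X -> is_psd (compress S X).
Proof.
move=> X_psd v; rewrite /compress.
by have -> : adjmx v *m (adjmx S *m X *m S) *m v = adjmx (S *m v) *m X *m (S *m v)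
  by rewrite adjmxM !mulmxA.
Qed.

Lemma psd_castmx m m' (e : m = m') (X : 'M[C]_m) : is_psd X -> is_psd (castmx (e, e) X).
Proof. by case: m' / e; rewrite castmx_id. Qed.

Lemma psd_tens_delta m k (X : 'M[C]_m) (c : 'I_k) :
  is_psd X -> is_psd (X *t (delta_mx c c : 'M[C]_k)).
Proof.
move=> X_psd.
have -> : X *t (delta_mx c c : 'M[C]_k) =
          compress ((1%:M : 'M_m) *t (delta_mx 0 c : 'M_(1, k))) (X *t 1%:M).
  by rewrite /compress adjmx_tens adjmx1 adjmx_delta !tensmx_mul mul1mx !mulmx1 mul_delta_mx.
by apply: psd_compress; rewrite tens_mx_scalar scale1r; apply: psd_castmx.
Qed.

Lemma psd_diag_ge0 m (X : 'M[C]_m) c : is_psd X -> 0 <= X c c.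
Proof. by move=> X_psd; rewrite -mulmx_delta_entry; apply: X_psd. Qed.

Lemma psd_diag_le_trace m (X : 'M[C]_m) c : is_psd X -> X c c <= \tr X.
Proof.
move=> X_psd; rewrite /mxtrace (bigD1 c) //= lerDl.
by apply: sumr_ge0 => i _; apply: psd_diag_ge0.
Qed.

Lemma psd_diag2_le_trace m (X : 'M[C]_m) c d : c != d -> is_psd X ->
  X c c + X d d <= \tr X.
Proof.
move=> cd X_psd; rewrite /mxtrace (bigD1 c) //= (bigD1 d) 1?eq_sym //= addrA lerDl.
by apply: sumr_ge0 => i _; apply: psd_diag_ge0.
Qed.

Lemma psd_hermitian m (X : 'M[C]_m) : is_psd X -> adjmx X = X.
Proof.
move=> X_psd; apply/matrixP => a b; rewrite mxE; apply/eqP; rewrite -subr_eq0; apply/eqP.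
apply: (@polarize C^o _ ((X a b)^* - X b a)) => u uu.
have := geC0_conj (X_psd (delta_mx a 0 + u *: delta_mx b 0)).
rewrite -/(compress _ X) compress_delta_addZ uu !mul1r !rmorphD !rmorphM /= conjCK.
rewrite !(geC0_conj (psd_diag_ge0 _ X_psd)) => /eqP; rewrite -subr_eq0 => /eqP <-.
by rewrite /GRing.scale /=; ring.
Qed.

Lemma is_CP_compress k l (S : 'M[C]_(k, l)) : is_CP (compress S).
Proof.
split=> [|p X X_psd]; first exact: compress_linear.
by rewrite tensor_map_compressl; apply: psd_compress.
Qed.

Lemma is_CP_add m n (f g : 'M[C]_m -> 'M[C]_n) :
  is_CP f -> is_CP g -> is_CP (fun X => f X + g X).
Proof.
move=> [f_lin f_pos] [g_lin g_pos]; split=> [|p X X_psd]; first exact: is_linear_add.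
by rewrite tensor_mapDl; apply: psdD; [apply: f_pos | apply: g_pos].
Qed.

Lemma is_CP_scale m n (t : C) (f : 'M[C]_m -> 'M[C]_n) :
  0 <= t -> is_CP f -> is_CP (fun X => t *: f X).
Proof.
move=> t_ge0 [f_lin f_pos]; split=> [|p X X_psd]; first exact: is_linear_scale.
by rewrite tensor_mapZl; apply: psdZ => //; apply: f_pos.
Qed.

Lemma is_TNI_compress_delta k (c : 'I_k) : is_TNI (compress (delta_mx c 0 : 'cV[C]_k)).
Proof. by move=> X X_psd; rewrite trace_mx11 mulmx_delta_entry psd_diag_le_trace. Qed.

Lemma is_TNI_compress_delta2 k (c d : 'I_k) : c != d ->
  is_TNI (fun X => compress (delta_mx c 0 : 'cV[C]_k) X + compress (delta_mx d 0) X).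
Proof.
move=> cd X X_psd.
by rewrite mxtraceD !trace_mx11 !mulmx_delta_entry psd_diag2_le_trace.
Qed.

Lemma is_TNI_half_compress k (c d : 'I_k) (u : C) : c != d -> u^* * u = 1 ->
  is_TNI (fun X => 2^-1 *: compress (delta_mx c 0 + u *: delta_mx d 0 : 'cV[C]_k) X).
Proof.
move=> cd uu X X_psd; rewrite mxtraceZ trace_mx11 compress_delta_addZ uu mul1r.
have := X_psd (delta_mx c 0 + (- u) *: delta_mx d 0).
rewrite -/(compress _ X) compress_delta_addZ rmorphN mulrNN uu mul1r => q_ge0.
(* parallelogram law: the forms at e_c + u e_d and e_c - u e_d add up to 2 (X c c + X d d) *)
apply: le_trans (psd_diag2_le_trace cd X_psd).
rewrite -subr_ge0; set q := _ + X d d in q_ge0.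
have -> : X c c + X d d - 2^-1 * (X c c + u * X c d + u^* * X d c + X d d) = 2^-1 * q.
  by rewrite /q; field.
by rewrite mulr_ge0 // invr_ge0 ler0n.
Qed.

Lemma mxtrace_delta m (a b : 'I_m) : \tr (delta_mx a b : 'M[C]_m) = (a == b)%:R.
Proof.
rewrite /mxtrace (bigD1 a) //= big1 => [|c /negbTE ca]; first by rewrite mxE eqxx addr0 eq_sym.
by rewrite mxE ca.
Qed.

Lemma psd1 m : is_psd (1%:M : 'M[C]_m).
Proof.
by move=> v; rewrite mulmx1 mxE sumr_ge0 // => i _; rewrite !mxE mulrC mul_conjC_ge0.
Qed.

Lemma density_delta m (a : 'I_m) : is_density (delta_mx a a : 'M[C]_m).
Proof.
split; last by rewrite mxtrace_delta eqxx.
have -> : (delta_mx a a : 'M[C]_m) = compress (delta_mx 0 a : 'M_(1, m)) 1%:M.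
  by rewrite /compress adjmx_delta mulmx1 mul_delta_mx.
exact/psd_compress/psd1.
Qed.

Definition pair_state m (a b : 'I_m) (u : C) : 'M[C]_m :=
  2^-1 *: (delta_mx a a + u^* *: delta_mx a b + u *: delta_mx b a + delta_mx b b).

Lemma density_pair_state m (a b : 'I_m) (u : C) : a != b -> u^* * u = 1 ->
  is_density (pair_state a b u).
Proof.
move=> ab uu; split.
  have -> : pair_state a b u = 2^-1 *: compress (delta_mx 0 a + u^* *: delta_mx 0 b : 'rV_m) 1%:M.
    rewrite compressDZ /compress !adjmx_delta !mulmx1 !mul_delta_mx.
    by rewrite conjCK [u * _]mulrC uu scale1r.
  apply: psdZ; first by rewrite invr_ge0 ler0n.
  exact/psd_compress/psd1.
rewrite mxtraceZ !mxtraceD !mxtraceZ !mxtrace_delta (negbTE ab) eq_sym (negbTE ab) !eqxx /=.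
by rewrite !mulr0 !addr0 -mulr2n mulVf ?pnatr_eq0.
Qed.

(* For a != b, E_ab = P(1) + i P(i) - (1 + i)/2 (E_aa + E_bb) with P := pair_state a b. *)
Definition span_state m (a b : 'I_m) (t : 'I_4) : 'M[C]_m :=
  if a == b then delta_mx a a else
  match val t with
  | 0 => pair_state a b 1 | 1 => pair_state a b 'i
  | 2 => delta_mx a a | _ => delta_mx b b
  end.

Definition span_weight m (a b : 'I_m) (t : 'I_4) : C :=
  if a == b then (val t == 0)%:R else
  match val t with 0 => 1 | 1 => 'i | _ => - (1 + 'i) / 2 end.

Lemma density_span_state m (a b : 'I_m) t : is_density (span_state a b t).
Proof.
rewrite /span_state; case: t => [[|[|[|t]]] _] /=; case: eqP => [_|/eqP ab];
  try exact: density_delta.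
  by apply: density_pair_state; rewrite // conjC1 mulr1.
by apply: density_pair_state; rewrite // conjCi mulNr -expr2 sqrCi opprK.
Qed.

Lemma sum_span_state m (a b : 'I_m) :
  \sum_t span_weight a b t *: span_state a b t = delta_mx a b.
Proof.
rewrite !big_ord_recl big_ord0 /span_weight /span_state /=.
case: eqP => [->|_]; first by rewrite scale1r !scale0r !addr0.
rewrite /pair_state conjC1 conjCi !scale1r; apply/matrixP => x y; rewrite !mxE.
apply/eqP; rewrite -subr_eq0; apply/eqP.
move: (_ && _)%:R (_ && _)%:R (_ && _)%:R (_ && _)%:R => E1 E2 E3 E4.
have i_root (z : C) : z = ('i ^+ 2 + 1) * ((E2 - E3) / 2) -> z = 0.
  by move=> ->; rewrite sqrCi addNr mul0r.
by apply: i_root; field.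
Qed.

Lemma matrix_sum_span_state m (Y : 'M[C]_m) :
  Y = \sum_(j : 'I_m * 'I_m * 'I_4)
        (Y j.1.1 j.1.2 * span_weight j.1.1 j.1.2 j.2) *: span_state j.1.1 j.1.2 j.2.
Proof.
rewrite -(pair_bigA _ (fun ab t =>
  (Y ab.1 ab.2 * span_weight ab.1 ab.2 t) *: span_state ab.1 ab.2 t)).
rewrite -(pair_bigA _ (fun a b => \sum_t (Y a b * span_weight a b t) *: span_state a b t)).
rewrite {1}[Y]matrix_sum_delta; apply: eq_bigr => a _; apply: eq_bigr => b _.
by rewrite -sum_span_state scaler_sumr; apply: eq_bigr => t _; rewrite scalerA.
Qed.

Lemma eq_linear_density m n (f g : 'M[C]_m -> 'M[C]_n) :
  is_linear f -> is_linear g -> (forall rho, is_density rho -> f rho = g rho) ->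
  forall X, f X = g X.
Proof.
move=> f_lin g_lin eq_fg X; rewrite [X]matrix_sum_span_state !is_linear_sum //.
by apply: eq_bigr => j _; rewrite !is_linearZ // eq_fg //; apply: density_span_state.
Qed.

Lemma density_convex m (r1 r2 : 'M[C]_m) (p q : C) : is_density r1 -> is_density r2 ->
  0 <= p -> 0 <= q -> p + q = 1 -> is_density (p *: r1 + q *: r2).
Proof.
move=> [r1_psd r1_tr] [r2_psd r2_tr] p_ge0 q_ge0 pq1; split; first by apply: psdD; apply: psdZ.
by rewrite mxtraceD !mxtraceZ r1_tr r2_tr !mulr1.
Qed.

Lemma sum_ReIm (V : lmodType C) (J : finType) (c : J -> C) (X : J -> V) :
  \sum_j c j *: X j = \sum_j 'Re (c j) *: X j + 'i *: \sum_j 'Im (c j) *: X j.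
Proof.
rewrite scaler_sumr -big_split; apply: eq_bigr => j _ /=.
by rewrite scalerA -scalerDl -Crect.
Qed.

Section LinearExtension.
Variables (m p : nat) (S : 'M[C]_m -> 'M[C]_p).
Hypothesis S_homo : forall (lam : C) rho, is_density rho -> S (lam *: rho) = lam *: S rho.
Hypothesis S_convex : forall r1 r2 (s t : C), is_density r1 -> is_density r2 ->
  0 <= s -> 0 <= t -> s + t = 1 -> S (s *: r1 + t *: r2) = s *: S r1 + t *: S r2.

Definition state_cone (Z : 'M[C]_m) := exists t rho, [/\ 0 <= t, is_density rho & Z = t *: rho].

Lemma S_cone_add Z1 Z2 : state_cone Z1 -> state_cone Z2 ->
  state_cone (Z1 + Z2) /\ S (Z1 + Z2) = S Z1 + S Z2.
Proof.
move=> [t1 [r1 [t1_ge0 r1_dens ->]]] [t2 [r2 [t2_ge0 r2_dens ->]]].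
have [/eqP|t_neq0] := eqVneq (t1 + t2) 0.
  rewrite paddr_eq0 // => /andP[/eqP -> /eqP ->]; rewrite !scale0r addr0.
  split; first by exists 0, r1; rewrite scale0r.
  by rewrite -(scale0r r1) S_homo // !scale0r addr0.
set T := t1 + t2; have T_ge0 : 0 <= T by rewrite addr_ge0.
have T_div : t1 / T + t2 / T = 1 by rewrite -mulrDl divff.
have Z_eq : t1 *: r1 + t2 *: r2 = T *: (t1 / T *: r1 + t2 / T *: r2).
  by rewrite scalerDr !scalerA !(mulrC T) !divfK.
have rho_dens := density_convex r1_dens r2_dens
  (divr_ge0 t1_ge0 T_ge0) (divr_ge0 t2_ge0 T_ge0) T_div.
split; first by exists T, (t1 / T *: r1 + t2 / T *: r2).
rewrite Z_eq S_homo // S_convex ?divr_ge0 // scalerDr !scalerA !(mulrC T) !divfK //.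
by rewrite !S_homo.
Qed.

Lemma S_cone_sum (J : finType) (t : J -> C) (D : J -> 'M[C]_m) (rho0 : 'M[C]_m) :
  is_density rho0 -> (forall j, 0 <= t j) -> (forall j, is_density (D j)) ->
  state_cone (\sum_j t j *: D j) /\ S (\sum_j t j *: D j) = \sum_j t j *: S (D j).
Proof.
move=> rho0_dens t_ge0 D_dens.
apply: (big_ind2 (fun Z W => state_cone Z /\ S Z = W)).
- split; first by exists 0, rho0; rewrite scale0r.
  by rewrite -(scale0r rho0) S_homo // scale0r.
- move=> Z1 W1 Z2 W2 [Z1_cone <-] [Z2_cone <-]; exact: S_cone_add.
- by move=> j _; rewrite S_homo //; split=> //; exists (t j), (D j).
Qed.

Lemma S_real_comb (J : finType) (r : J -> C) (D : J -> 'M[C]_m) (rho : 'M[C]_m) :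
  is_density rho -> (forall j, is_density (D j)) -> (forall j, r j \is Num.real) ->
  rho = \sum_j r j *: D j -> S rho = \sum_j r j *: S (D j).
Proof.
move=> rho_dens D_dens r_real rho_eq.
pose rp j := if 0 <= r j then r j else 0.
pose rn j := if 0 <= r j then 0 else - r j.
have rp_ge0 j : 0 <= rp j by rewrite /rp; case: ifP.
have rn_ge0 j : 0 <= rn j.
  by rewrite /rn; case: ifP => // /negbT r_lt0; rewrite oppr_ge0 ltW // real_ltNge ?real0.
have r_eq j : r j = rp j - rn j by rewrite /rp /rn; case: ifP; rewrite ?subr0 ?sub0r ?opprK.
have [rn_cone Sn] := S_cone_sum rho_dens rn_ge0 D_dens.
have [_ Sp] := S_cone_sum rho_dens rp_ge0 D_dens.
have rho_cone : state_cone rho by exists 1, rho; rewrite scale1r.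
have [_ S_add] := S_cone_add rho_cone rn_cone.
have : S rho + \sum_j rn j *: S (D j) = \sum_j rp j *: S (D j).
  rewrite -Sn -S_add -Sp rho_eq -big_split; congr (S _); apply: eq_bigr => j _.
  by rewrite /= r_eq scalerBl subrK.
move/(canRL (addrK _)) => ->; rewrite -sumrB.
by apply: eq_bigr => j _; rewrite -scalerBl -r_eq.
Qed.

Lemma S_comb (J : finType) (c : J -> C) (D : J -> 'M[C]_m) (rho : 'M[C]_m) :
  is_density rho -> (forall j, is_density (D j)) ->
  rho = \sum_j c j *: D j -> S rho = \sum_j c j *: S (D j).
Proof.
move=> rho_dens D_dens rho_eq.
set Re_rho := \sum_j 'Re (c j) *: D j; set Im_rho := \sum_j 'Im (c j) *: D j.
have rho_ReIm : rho = Re_rho + 'i *: Im_rho by rewrite rho_eq sum_ReIm.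
have rho_ReIm_conj : rho = Re_rho - 'i *: Im_rho.
  rewrite -(psd_hermitian rho_dens.1) rho_eq adjmx_sum.
  rewrite (eq_bigr (fun j => (c j)^* *: D j)) => [|j _]; last first.
    by rewrite adjmxZ psd_hermitian //; case: (D_dens j).
  rewrite sum_ReIm /Re_rho /Im_rho -scalerN -sumrN.
  by congr (_ + _ *: _); apply: eq_bigr => j _; rewrite ?Re_conj ?Im_conj ?scaleNr.
have Im_rho0 : Im_rho = 0.
  have /eqP : 'i *: Im_rho + 'i *: Im_rho = 0.
    by apply: (addrI Re_rho); rewrite addr0 addrA -rho_ReIm {1}rho_ReIm_conj subrK.
  by rewrite -scalerDl scaler_eq0 -mulr2n mulrn_eq0 (negbTE (neq0Ci C)) => /eqP.
have rho_Re : rho = Re_rho by rewrite rho_ReIm Im_rho0 scaler0 addr0.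
have S_Re := S_real_comb rho_dens D_dens (fun j => Creal_Re (c j)) rho_Re.
have S_ReIm : S rho = \sum_j ('Re (c j) + 'Im (c j)) *: S (D j).
  apply: S_real_comb => // [j|]; first by rewrite realD ?Creal_Re ?Creal_Im.
  by under eq_bigr do rewrite scalerDl; rewrite big_split /= -/Re_rho -/Im_rho Im_rho0 addr0.
have S_Im0 : \sum_j 'Im (c j) *: S (D j) = 0.
  apply: (addrI (S rho)); rewrite addr0 {1}S_Re S_ReIm -big_split.
  by apply: eq_bigr => j _ /=; rewrite scalerDl.
by rewrite sum_ReIm S_Im0 scaler0 addr0.
Qed.

Lemma linear_extension : exists L, is_linear L /\ forall rho, is_density rho -> L rho = S rho.
Proof.
pose L (Y : 'M[C]_m) := \sum_(j : 'I_m * 'I_m * 'I_4)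
  (Y j.1.1 j.1.2 * span_weight j.1.1 j.1.2 j.2) *: S (span_state j.1.1 j.1.2 j.2).
exists L; split=> [a X Y|rho rho_dens].
  rewrite /L scaler_sumr -big_split; apply: eq_bigr => j _.
  by rewrite !mxE mulrDl scalerDl scalerA mulrA.
by apply/esym/S_comb => //; [move=> j; apply: density_span_state | apply: matrix_sum_span_state].
Qed.

End LinearExtension.

Lemma env_CPTNI_separates p k (X Y : 'M[C]_(p * k)) :
  (forall I : 'M[C]_k -> 'M[C]_1, is_CP I -> is_TNI I ->
     tensor_map (fun Z : 'M[C]_p => Z) I X = tensor_map (fun Z : 'M[C]_p => Z) I Y) ->
  X = Y.
Proof.
move=> eq_env; apply/eqP; rewrite -subr_eq0; apply/eqP; set D := X - Y.
have D_env (I : 'M[C]_k -> 'M[C]_1) :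
    is_CP I -> is_TNI I -> tensor_map (fun Z : 'M[C]_p => Z) I D = 0.
  by move=> I_CP I_TNI; rewrite (is_linearB (tensor_map_linear _ _)) eq_env ?subrr.
pose V c := (1%:M : 'M[C]_p) *t (delta_mx c 0 : 'cV[C]_k).
have D_diag c : compress (V c) D = 0.
  rewrite -tensor_map_compressr D_env //.
    exact: is_CP_compress.
  exact: is_TNI_compress_delta.
have D_block c d : adjmx (V c) *m D *m V d = 0.
  have [<-|cd] := eqVneq c d; first exact: D_diag.
  apply: (@polarize _ _ (adjmx (V d) *m D *m V c)) => u uu.
  have half_ge0 : 0 <= 2^-1 :> C by rewrite invr_ge0 ler0n.
  move: (D_env _ (is_CP_scale half_ge0 (is_CP_compress _)) (is_TNI_half_compress cd uu)).
  rewrite tensor_mapZr tensor_map_compressr tensmxDr tensmxZr compressDZ !D_diag uu.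
  rewrite scale1r addr0 add0r => /eqP; rewrite scalemx_eq0 invr_eq0 pnatr_eq0 /=.
  by move/eqP.
have V_sum : \sum_c V c *m adjmx (V c) = 1%:M.
  rewrite -tensmx11 [X in _ *t X]mx1_sum_delta tensmx_sumr; apply: eq_bigr => c _.
  by rewrite adjmx_tens adjmx1 adjmx_delta tensmx_mul mulmx1 mul_delta_mx.
rewrite -[D]mul1mx -V_sum mulmx_suml big1 // => c _.
rewrite -[D]mulmx1 -V_sum !mulmx_sumr big1 // => d _.
have -> : V c *m adjmx (V c) *m (D *m (V d *m adjmx (V d)))
          = V c *m (adjmx (V c) *m D *m V d) *m adjmx (V d) by rewrite !mulmxA.
by rewrite D_block mulmx0 mul0mx.
Qed.

Lemma mxtrace_tens m k (A : 'M[C]_m) (B : 'M[C]_k) : \tr (A *t B) = \tr A * \tr B.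
Proof.
rewrite /mxtrace sum_mxtens_index mulr_suml; apply: eq_bigr => a _.
by rewrite mulr_sumr; apply: eq_bigr => c _; rewrite tensmxE.
Qed.

Lemma compress_delta_mx k (c d : 'I_k) :
  compress (delta_mx c 0 : 'cV[C]_k) (delta_mx d d) = (c == d)%:R *: 1%:M.
Proof. by rewrite [LHS]mx11_scalar mulmx_delta_entry mxE andbb scalemx1. Qed.

Lemma castmx_tens1 m n (X : 'M[C]_(m * 1, n * 1)) :
  castmx (muln1 m, muln1 n) X *t (1%:M : 'M[C]_1) = X.
Proof. by rewrite tens_mx_scalar scale1r castmxK. Qed.

Lemma tens1_inj m n : injective (fun A : 'M[C]_(m, n) => A *t (1%:M : 'M[C]_1)).
Proof. by move=> A B /=; rewrite !tens_mx_scalar !scale1r => /(can_inj (castmxKV _ _)). Qed.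

Lemma ptr1_linear m n : is_linear (@ptr1 R m n).
Proof.
move=> a X Y; apply/matrixP => i j; rewrite !mxE mulr_sumr -big_split.
by apply: eq_bigr => b _; rewrite !mxE.
Qed.

End Operators.

Section StateOverTime.
Variables (R : realType) (star : sot_fun R).
Arguments star : clear implicits.
Local Notation C := R[i].
Hypothesis star_sot : is_sot star.

Lemma sot_homogeneous m n (E : 'M[C]_m -> 'M[C]_n) (lam : C) rho :
  is_channel E -> is_density rho -> star m n E (lam *: rho) = lam *: star m n E rho.
Proof. by move=> E_ch rho_dens; have [_ _ ->] := star_sot E_ch rho_dens. Qed.

Section AxiomE.
Variable ext : ext_fun R.
Arguments ext : clear implicits.
Hypothesis star_E : axiomE star ext.

Lemma axiomE_convex m n (E : 'M[C]_m -> 'M[C]_n) (r1 r2 : 'M[C]_m) (p q : C) :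
  is_channel E -> is_density r1 -> is_density r2 -> 0 <= p -> 0 <= q -> p + q = 1 ->
  star m n E (p *: r1 + q *: r2) = p *: star m n E r1 + q *: star m n E r2.
Proof.
move=> E_ch r1_dens r2_dens p_ge0 q_ge0 pq1; have [ext_env [_ [ext_state _]]] := star_E.
pose P (c : 'I_2) := compress (delta_mx c 0 : 'cV[C]_2).
pose Z := (p *: r1) *t (delta_mx 0 0 : 'M[C]_2) + (q *: r2) *t delta_mx 1 1.
have Z_QSS : is_QSS star Z.
  left; case: r1_dens r2_dens => [r1_psd r1_tr] [r2_psd r2_tr]; split.
    by apply: psdD; apply/psd_tens_delta/psdZ.
  by rewrite mxtraceD !mxtrace_tens !mxtrace_delta !mxtraceZ r1_tr r2_tr !mulr1.
have P_Z c : tensor_map (fun X : 'M[C]_m => X) (P c) Z =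
    (c == 0)%:R *: ((p *: r1) *t 1%:M) + (c == 1)%:R *: ((q *: r2) *t 1%:M).
  have P_lin : is_linear (P c) by apply: compress_linear.
  rewrite (is_linearD (tensor_map_linear _ _)) !tensor_map_tens //.
  by rewrite /P !compress_delta_mx !tensmxZr.
have P0_Z : tensor_map (fun X : 'M[C]_m => X) (P 0) Z = (p *: r1) *t 1%:M.
  by rewrite P_Z eqxx (_ : 0 == 1 = false) // scale1r scale0r addr0.
have P1_Z : tensor_map (fun X : 'M[C]_m => X) (P 1) Z = (q *: r2) *t 1%:M.
  by rewrite P_Z eqxx (_ : 1 == 0 = false) // scale1r scale0r add0r.
have ext_P (c : 'I_2) (rho : 'M[C]_m) (s : C) : is_density rho ->
    tensor_map (fun X : 'M[C]_m => X) (P c) Z = (s *: rho) *t 1%:M ->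
    tensor_map (fun X : 'M[C]_(m * n) => X) (P c) (ext m n 2 E Z)
    = s *: star m n E rho *t 1%:M.
  move=> rho_dens PZ; rewrite ext_env ?PZ ?ext_state ?sot_homogeneous //.
    exact: is_CP_compress.
  exact: is_TNI_compress_delta.
have tr_CP : is_CP (fun X => P 0 X + P 1 X) by apply: is_CP_add; apply: is_CP_compress.
have tr_TNI : is_TNI (fun X => P 0 X + P 1 X) by apply: is_TNI_compress_delta2.
have := ext_env _ _ _ _ E _ Z E_ch Z_QSS tr_CP tr_TNI.
rewrite !tensor_mapDr (ext_P 0 r1 p) // (ext_P 1 r2 q) // P0_Z P1_Z -!tensmxDl.
rewrite -[p *: r1 + q *: r2]scale1r ext_state //; last exact: density_convex.
by rewrite scale1r => /tens1_inj.
Qed.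

Lemma axiomE_ext_tensor_map m n k (E : 'M[C]_m -> 'M[C]_n) (rho : 'M[C]_(m * k)) :
  is_channel E -> is_QSS star rho ->
  exists L, is_linext star E L /\ ext m n k E rho = tensor_map L (fun Y : 'M[C]_k => Y) rho.
Proof.
move=> E_ch rho_QSS; have [ext_env [_ [_ ext_linext]]] := star_E.
have [L [L_lin L_star]] := linear_extension
  (fun lam r => sot_homogeneous lam E_ch) (fun r1 r2 p q => axiomE_convex E_ch).
exists L; split=> //; apply: env_CPTNI_separates => I I_CP I_TNI; have I_lin := I_CP.1.
rewrite ext_env // tensor_map_comm // -[tensor_map _ I rho]castmx_tens1.
by rewrite (ext_linext _ _ E L) // tensor_map_tens.
Qed.

End AxiomE.

Lemma linext_axiomE (L : forall m n, ('M[C]_m -> 'M[C]_n) -> 'M[C]_m -> 'M[C]_(m * n)) :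
  (forall m n (E : 'M[C]_m -> 'M[C]_n), is_channel E -> is_linext star E (L m n E)) ->
  axiomE star (fun m n k E X => tensor_map (L m n E) (fun Y : 'M[C]_k => Y) X).
Proof.
move=> L_linext; split; [|split; [|split]].
- move=> m n k k' E I rho E_ch _ [I_lin _] _.
  by apply: tensor_map_comm => //; case: (L_linext m n E E_ch).
- move=> m n k E rho E_ch _; have [L_lin L_star] := L_linext m n E E_ch.
  have E_lin : is_linear E by case: E_ch => [[]].
  have ptr1_L X : ptr1 (L m n E X) = E X.
    move: X; apply: eq_linear_density => // [|r r_dens].
      by apply: is_linear_comp => //; apply: ptr1_linear.
    by rewrite L_star //; case: (star_sot E_ch r_dens).
  move: rho; apply: eq_linear_tens => [||a b c d].
  + by apply: is_linear_comp; apply: tensor_map_linear.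
  + exact: tensor_map_linear.
  by rewrite !tensor_map_tens ?ptr1_L //; apply: ptr1_linear.
- move=> m n E lam rho E_ch rho_dens; have [L_lin L_star] := L_linext m n E E_ch.
  by rewrite tensor_map_tens // is_linearZ // L_star // sot_homogeneous.
- move=> m n E L' E_ch [L'_lin L'_star] Y; have [L_lin L_star] := L_linext m n E E_ch.
  rewrite tensor_map_tens //; congr (_ *t _).
  by apply: eq_linear_density Y => // r r_dens; rewrite L_star ?L'_star.
Qed.

End StateOverTime.

Theorem corollary1 (R : realType) :
  (* (E) implies the formula E * rho_AE = ((E * .) (x) id_E)(rho_AE) *)
  (forall (star : sot_fun R) (ext : ext_fun R),
     is_sot star -> axiomE star ext ->
     forall (m n k : nat) (E : 'M[R[i]]_m -> 'M[R[i]]_n) (rho : 'M[R[i]]_(m * k)),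
       is_channel E -> is_QSS star rho ->
       exists L : 'M[R[i]]_m -> 'M[R[i]]_(m * n),
         is_linext star E L /\
         ext m n k E rho = tensor_map L (fun Y : 'M[R[i]]_k => Y) rho) /\
  (* conversely, state-linear functions satisfy (E) with this formula *)
  (forall star : sot_fun R,
     is_sot star -> state_linear star ->
     forall L : forall m n : nat, ('M[R[i]]_m -> 'M[R[i]]_n) -> 'M[R[i]]_m -> 'M[R[i]]_(m * n),
       (forall (m n : nat) (E : 'M[R[i]]_m -> 'M[R[i]]_n),
          is_channel E -> is_linext star E (L m n E)) ->
       axiomE star (fun m n k E X => tensor_map (L m n E) (fun Y : 'M[R[i]]_k => Y) X)).
Proof.
split=> [star ext star_sot star_E m n k E rho|star star_sot _ L L_linext].
  exact: axiomE_ext_tensor_map.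
exact: linext_axiomE.
Qed.
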